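(* Let $H:\mathbb R_+\to(0,1)$ be continuous and satisfy: (H1) there are constants $0<h_1<h_2<1$ with $h_1\le H_t\le h_2$ for all $t\ge0$; (H2) there are constants $D>0$, $\kappa\in(0,1]$ with $|H_t-H_s|\le D|t-s|^\kappa$ for all $t\ge s>0$. Let $Y$ be the multifractional Brownian motion with Hurst function $H$. Let $z(s)=s^{h_2}(\log^2s+1)^{1/2}$ for $s\ge1$ and $z(s)=1$ for $0\le s<1$, and let $K_2>0$ be a constant such that $\mathbb E(Y(t)-Y(s))^2\le K_2|t-s|^{2H_t}+K_2(H_t-H_s)^2z^2(s)$ for all $t\ge s\ge0$. Put $K_3=K_2^{1/2}(1+D^2)^{1/2}$, $h_3=\min\{h_1,\kappa\}$, $h_4=\max\{h_2,\kappa\}$, $h_5=h_4-h_3$. Let $a,b\in\mathbb R_+$ with $b-a\ge1$. Then: (a) for all $t,s\in[a,b]$ with $|t-s|\le1$, $\left(\mathbb E(Y(t)-Y(s))^2\right)^{1/2}\le K_3|t-s|^{h_3}z(b)$; (b) for all $t,s\in[a,b]$, $\left(\mathbb E(Y(t)-Y(s))^2\right)^{1/2}\le K_3|t-s|^{h_3}(b-a)^{h_5}z(b)$; (c) for all $t_1,t_2,s_1,s_2\in[a,b]$, \[ \left(\mathbb E(Y(t_1)-Y(t_2)-Y(s_1)+Y(s_2))^2\right)^{1/2}\le 2K_3\max(|t_1-s_1|,|t_2-s_2|)^{h_3}(b-a)^{h_5}z(b). \]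
   Context: The (harmonizable) multifractional Brownian motion with continuous functional parameter $H$ is $Y(t)=\int_{\mathbb R}\frac{e^{itu}-1}{|u|^{H_t+1/2}}\widetilde W(du)$, $t\ge0$, where $\widetilde W$ is the Fourier transform of real Gaussian white noise $W$ (the unique complex-valued random measure with $\int f\,dW=\int\widehat f\,d\widetilde W$ a.s. for all $f\in L^2(\mathbb R)$). Such a constant $K_2$ exists. *)

From HB Require Import structures.
From mathcomp Require Import all_boot all_order all_algebra.
From mathcomp Require Import all_classical all_reals all_analysis.
Set Implicit Arguments. Unset Strict Implicit. Unset Printing Implicit Defensive.
Import Order.TTheory GRing.Theory Num.Theory.
Local Open Scope ring_scope.

(* |(e^{itu}-1)/|u|^{H_t+1/2} - (e^{isu}-1)/|u|^{H_s+1/2}|^2, written out in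
   real and imaginary parts *)
Definition mbm_incr_integrand {R : realType} (H : R -> R) (t s u : R) : R :=
  let c1 := `|u| `^ (- (H t + 2^-1)) in
  let c2 := `|u| `^ (- (H s + 2^-1)) in
  (c1 * (cos (t * u) - 1) - c2 * (cos (s * u) - 1)) ^+ 2
  + (c1 * sin (t * u) - c2 * sin (s * u)) ^+ 2.

(* Y is a (version of the) harmonizable multifractional Brownian motion with
   Hurst function H, at the level of second moments of increments:
   E (Y(t)-Y(s))^2 = cst * \int_R |(e^{itu}-1)/|u|^{H_t+1/2}
                                  - (e^{isu}-1)/|u|^{H_s+1/2}|^2 du,
   where cst > 0 is the normalization constant of the Fourier transform
   of white noise (its value depends on the Fourier convention). *)
Definition is_mbm {R : realType} {d} {T : measurableType d}
  (P : probability T R) (H : R -> R) (Y : R -> T -> R) : Prop :=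
  (forall t, 0 <= t -> measurable_fun setT (Y t)) /\
  exists cst : R, 0 < cst /\
    forall t s, 0 <= t -> 0 <= s ->
      (\int[P]_w ((Y t w - Y s w) ^+ 2)%:E =
       cst%:E * \int[lebesgue_measure]_u (mbm_incr_integrand H t s u)%:E)%E.

Definition mom2 {R : realType} {d} {T : measurableType d}
  (P : probability T R) (X : T -> R) : \bar R :=
  (\int[P]_w ((X w) ^+ 2)%:E)%E.

(* the L^2 norm (E X^2)^{1/2} (meaningful when mom2 P X is finite) *)
Definition l2norm {R : realType} {d} {T : measurableType d}
  (P : probability T R) (X : T -> R) : R :=
  Num.sqrt (fine (mom2 P X)).

Definition zfun {R : realType} (h2 s : R) : R :=
  if 1 <= s then s `^ h2 * Num.sqrt ((ln s) ^+ 2 + 1) else 1.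

(* For s <= t the assumption on K2 bounds E (Y t - Y s)^2 by
   K2 (t-s)^(2 H_t) + K2 (H_t - H_s)^2 z(s)^2, and the Hölder condition on H
   (which extends to s = 0 by continuity) turns the second term into at most
   K2 D^2 (t-s)^(2 kappa) z(s)^2.  Both exponents H_t and kappa lie in [h3, h4],
   so (t-s)^H_t and (t-s)^kappa are at most (t-s)^h3 when t - s <= 1, and at most
   (t-s)^h3 (b-a)^h5 when t - s <= b - a.  Since z is nondecreasing and at least 1,
   this gives (a) and (b) with K3^2 = K2 (1 + D^2).  For (c), the second-order
   increment is the difference of the increments over (s1, t1) and (s2, t2), and
   (x - y)^2 <= 2 x^2 + 2 y^2. *)

From HB Require Import structures.
From mathcomp Require Import all_boot all_order all_algebra.
From mathcomp Require Import all_classical all_reals all_analysis.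
From mathcomp Require Import ring lra measurable_realfun.
Set Implicit Arguments.
Unset Strict Implicit.
Unset Printing Implicit Defensive.
Import Order.TTheory GRing.Theory Num.Theory.
Import numFieldNormedType.Exports.
Local Open Scope classical_set_scope.
Local Open Scope ring_scope.

Section second_moments.
Variables (R : realType) (d : measure_display) (T : measurableType d).
Variable P : probability T R.

Lemma mom2_ge0 (X : T -> R) : (0 <= mom2 P X)%E.
Proof. by apply: integral_ge0 => w _; rewrite lee_fin sqr_ge0. Qed.

Lemma l2norm_le_of_mom2 (X : T -> R) (c : R) : 0 <= c ->
  (mom2 P X <= (c ^+ 2)%:E)%E -> (mom2 P X < +oo)%E /\ l2norm P X <= c.
Proof.
move=> c_ge0 mX_le; split; first by apply: le_lt_trans mX_le _; rewrite ltey.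
rewrite /l2norm; move: mX_le (mom2_ge0 X); case: (mom2 P X) => [r| |] //=.
rewrite !lee_fin => r_le r_ge0.
by rewrite -(ger0_norm c_ge0) -sqrtr_sqr; apply: ler_wsqrtr.
Qed.

Lemma mom2_distrC (X Z : T -> R) :
  mom2 P (fun w => X w - Z w) = mom2 P (fun w => Z w - X w).
Proof. by apply: eq_integral => w _; rewrite -opprB sqrrN. Qed.

Lemma mom2_sub_le (X Z : T -> R) :
  measurable_fun setT X -> measurable_fun setT Z ->
  (mom2 P (fun w => (X w - Z w)%R) <= 2%:E * mom2 P X + 2%:E * mom2 P Z)%E.
Proof.
move=> mX mZ.
have sqr_ge0E (F : T -> R) w : [set: T] w -> (0 <= (F w ^+ 2)%:E)%E.
  by rewrite lee_fin sqr_ge0.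
have msqr (F : T -> R) : measurable_fun setT F ->
    measurable_fun setT (fun w => ((F w ^+ 2)%:E : \bar R)).
  by move=> mF; apply/measurable_EFinP; exact: measurable_funX.
rewrite /mom2 -(ge0_integralZl_EFin _ _ (sqr_ge0E X) (msqr X mX)) //.
rewrite -(ge0_integralZl_EFin _ _ (sqr_ge0E Z) (msqr Z mZ)) //.
rewrite -ge0_integralD //; last 4 first.
- by move=> w _; rewrite -EFinM lee_fin mulr_ge0 ?sqr_ge0.
- by apply: emeasurable_funM => //; exact: msqr.
- by move=> w _; rewrite -EFinM lee_fin mulr_ge0 ?sqr_ge0.
- by apply: emeasurable_funM => //; exact: msqr.
apply: ge0_le_integral => //.
- exact: sqr_ge0E.
- apply: (msqr (fun w => X w - Z w)); exact: measurable_funB.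
- by apply: emeasurable_funD; apply: emeasurable_funM => //; exact: msqr.
- move=> w _; rewrite -!EFinM -EFinD lee_fin.
  have := sqr_ge0 (X w + Z w); nra.
Qed.

Lemma l2norm_sub_le (X Z : T -> R) (c : R) :
  measurable_fun setT X -> measurable_fun setT Z -> 0 <= c ->
  (mom2 P X <= (c ^+ 2)%:E)%E -> (mom2 P Z <= (c ^+ 2)%:E)%E ->
  (mom2 P (fun w => (X w - Z w)%R) < +oo)%E /\
  l2norm P (fun w => (X w - Z w)%R) <= 2 * c.
Proof.
move=> mX mZ c_ge0 mX_le mZ_le.
apply: l2norm_le_of_mom2; first by rewrite mulr_ge0.
apply: le_trans (mom2_sub_le mX mZ) _.
rewrite [leRHS](_ : _ = 2%:E * (c ^+ 2)%:E + 2%:E * (c ^+ 2)%:E)%E;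
  last by rewrite -!EFinM -EFinD; congr EFin; ring.
by rewrite leeD // lee_wpmul2l.
Qed.

End second_moments.

Lemma holder_bound_at0 (R : realType) (f : R -> R) (D kappa : R) :
  {within [set x : R | 0 <= x], continuous f} -> 0 <= D -> 0 <= kappa ->
  (forall t s, 0 < s -> s <= t -> `|f t - f s| <= D * (t - s) `^ kappa) ->
  forall t s, 0 <= s -> s <= t -> `|f t - f s| <= D * (t - s) `^ kappa.
Proof.
move=> f_cont D_ge0 k_ge0 f_holder t s; rewrite le0r => /orP[/eqP->|]; last exact: f_holder.
rewrite subr0 le0r => /orP[/eqP->|t_gt0].
  by rewrite subrr normr0 mulr_ge0 ?powR_ge0.
apply/ler_addgt0Pr => e e_gt0.
have /cvgr_dist_lt/(_ e e_gt0)/nbhs_ballP[r /= r_gt0 near0] :=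
  (proj1 (subspace_continuousP _ _) f_cont) 0 (lexx 0).
pose x := Num.min (r / 2) (t / 2).
have x_gt0 : 0 < x by rewrite lt_min !divr_gt0.
have x_le_t : x <= t by rewrite ge_min; apply/orP; right; lra.
have fx_near : `|f 0 - f x| < e.
  apply: near0 (ltW x_gt0); rewrite /ball /= sub0r normrN gtr0_norm //.
  by rewrite gt_min; apply/orP; left; lra.
(* pass through f x: the Hölder bound at x > 0 plus continuity at 0 *)
rewrite -(subrK (f x) (f t)) -addrA (le_trans (ler_normD _ _)) // lerD //.
  apply: le_trans (f_holder t x x_gt0 x_le_t) _; rewrite ler_wpM2l //.
  by apply: ge0_ler_powR; rewrite ?nnegrE; lra.
by rewrite distrC ltW.
Qed.

Lemma zfun_ge1 (R : realType) (h2 s : R) : 0 <= h2 -> 1 <= zfun h2 s.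
Proof.
move=> h2_ge0; rewrite /zfun; case: ifP => // s_ge1.
rewrite -[X in X <= _]mulr1; apply: ler_pM => //; first by rewrite -(powRr0 s) ler_powR.
by rewrite -[X in X <= _]sqrtr1 ler_wsqrtr // lerDr sqr_ge0.
Qed.

Lemma ler_zfun (R : realType) (h2 s b : R) : 0 <= h2 -> s <= b ->
  zfun h2 s <= zfun h2 b.
Proof.
move=> h2_ge0 s_le_b; have [s_ge1|s_lt1] := leP 1 s; last first.
  by rewrite {1}/zfun ifN ?zfun_ge1 // -ltNge.
have b_ge1 : 1 <= b by apply: le_trans s_le_b.
rewrite /zfun s_ge1 b_ge1; apply: ler_pM; rewrite ?powR_ge0 ?sqrtr_ge0 //.
  by apply: ge0_ler_powR; rewrite ?nnegrE; lra.
by rewrite ler_wsqrtr // lerD2r ler_pM ?ln_ge0 // ler_ln // posrE; lra.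
Qed.

Lemma ge0_ger_powR (R : realType) (x p q : R) : 0 <= x <= 1 -> 0 < p -> p <= q ->
  x `^ q <= x `^ p.
Proof.
move=> /andP[x_ge0 x_le1] p_gt0 p_le_q; have [->|x_neq0] := eqVneq x 0.
  by rewrite !powR0 ?gt_eqF //; lra.
by apply: ger_powR => //; rewrite lt_neqAle eq_sym x_neq0 x_ge0.
Qed.

Lemma powR_mul2l (R : realType) (x p : R) : x `^ (2 * p) = (x `^ p) ^+ 2.
Proof.
have [x_ge0|x_lt0] := leP 0 x; last by rewrite !lt0_powR1 // expr1n.
by rewrite mulrC powRrM -[2]/(2%:R) powR_mulrn ?powR_ge0.
Qed.

(* For x <= 1 the smallest exponent wins; for 1 < x <= L the largest one does, and
   x^hi = x^lo x^(hi-lo) <= x^lo L^(hi-lo). *)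
Lemma ler_powR_range (R : realType) (x L p lo hi : R) :
  0 <= x <= L -> 1 <= L -> 0 < lo -> lo <= p <= hi ->
  x `^ p <= x `^ lo * L `^ (hi - lo).
Proof.
move=> /andP[x_ge0 x_le_L] L_ge1 lo_gt0 /andP[lo_le_p p_le_hi].
have [x_le1|x_gt1] := leP x 1.
  rewrite (le_trans (ge0_ger_powR _ lo_gt0 lo_le_p)) ?x_ge0 //.
  by rewrite ler_peMr ?powR_ge0 // -(powRr0 L) ler_powR // subr_ge0; lra.
rewrite (le_trans (ler_powR (ltW x_gt1) p_le_hi)) //.
rewrite -{1}(subrKC lo hi) [leLHS]powRD; last by apply/implyP => _; rewrite gt_eqF //; lra.
rewrite ler_wpM2l ?powR_ge0 // ge0_ler_powR ?nnegrE ?subr_ge0; lra.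
Qed.

Lemma holder_incr_sqr_le (R : realType) (K2 D kappa Ht dH u zs zb v : R) :
  0 <= K2 -> 0 <= D -> `|dH| <= D * u `^ kappa ->
  0 <= zs -> zs <= zb -> 1 <= zb -> 0 <= v ->
  u `^ Ht <= v -> u `^ kappa <= v ->
  K2 * u `^ (2 * Ht) + K2 * dH ^+ 2 * zs ^+ 2
  <= (Num.sqrt K2 * Num.sqrt (1 + D ^+ 2) * v * zb) ^+ 2.
Proof.
move=> K2_ge0 D_ge0 dH_le zs_ge0 zs_le zb_ge1 v_ge0 uH_le uk_le.
rewrite !exprMn !sqr_sqrtr ?addr_ge0 ?sqr_ge0 // powR_mul2l.
rewrite [leRHS](_ : _ = K2 * (v ^+ 2 * zb ^+ 2) + K2 * (D ^+ 2 * v ^+ 2 * zb ^+ 2));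
  last by ring.
have zb2_ge1 : 1 <= zb ^+ 2 by rewrite -(expr1n R 2) ler_pXn2r // nnegrE; lra.
rewrite -mulrA lerD // ler_wpM2l //.
  rewrite (@le_trans _ _ (v ^+ 2)) ?ler_peMr ?sqr_ge0 //.
  by rewrite ler_pXn2r // nnegrE powR_ge0.
rewrite ler_pM ?sqr_ge0 //; last by rewrite ler_pXn2r // nnegrE; lra.
rewrite -exprMn -real_normK ?num_real // ler_pXn2r ?nnegrE ?mulr_ge0 //.
by rewrite (le_trans dH_le) // ler_wpM2l.
Qed.

Section mbm_increment.
Variables (R : realType) (d : measure_display) (T : measurableType d).
Variables (P : probability T R) (H : R -> R) (Y : R -> T -> R).
Variables (h2 h3 h4 D kappa K2 : R).
Hypothesis h2_ge0 : 0 <= h2.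
Hypothesis h3_gt0 : 0 < h3.
Hypothesis D_ge0 : 0 <= D.
Hypothesis K2_ge0 : 0 <= K2.
Hypothesis H_range : forall t, 0 <= t -> h3 <= H t <= h4.
Hypothesis kappa_range : h3 <= kappa <= h4.
Hypothesis H_holder :
  forall t s, 0 <= s -> s <= t -> `|H t - H s| <= D * (t - s) `^ kappa.
Hypothesis Y_meas : forall t, 0 <= t -> measurable_fun setT (Y t).
Hypothesis mom2_Y_le : forall t s, 0 <= s -> s <= t ->
  (mom2 P (fun w => (Y t w - Y s w)%R) <=
   (K2 * (t - s) `^ (2 * H t) + K2 * (H t - H s) ^+ 2 * (zfun h2 s) ^+ 2)%:E)%E.

Local Notation K3 := (Num.sqrt K2 * Num.sqrt (1 + D ^+ 2)).

Lemma mom2_incr_le b t s v : 0 <= t <= b -> 0 <= s <= b -> 0 <= v ->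
  (forall p, h3 <= p <= h4 -> `|t - s| `^ p <= v) ->
  (mom2 P (fun w => (Y t w - Y s w)%R) <= ((K3 * v * zfun h2 b) ^+ 2)%:E)%E.
Proof.
wlog s_le_t : t s / s <= t.
  move=> incr_le ht hs v_ge0 dist_le; have [s_le_t|t_lt_s] := leP s t; first exact: incr_le.
  rewrite mom2_distrC incr_le ?(ltW t_lt_s) // => p hp.
  by rewrite distrC dist_le.
move=> /andP[t_ge0 t_le_b] /andP[s_ge0 s_le_b] v_ge0.
rewrite ger0_norm ?subr_ge0 // => dist_le.
apply: le_trans (mom2_Y_le s_ge0 s_le_t) _; rewrite lee_fin.
apply: (holder_incr_sqr_le (kappa := kappa));
  rewrite ?zfun_ge1 ?ler_zfun ?H_holder ?dist_le ?H_range //.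
by rewrite (le_trans _ (zfun_ge1 s h2_ge0)).
Qed.

Lemma incr_bound_ge0 x b : 0 <= x -> 0 <= K3 * x * zfun h2 b.
Proof.
by move=> x_ge0; rewrite !mulr_ge0 ?sqrtr_ge0 // (le_trans ler01) ?zfun_ge1.
Qed.

Lemma l2norm_incr_le_near b t s : 0 <= t <= b -> 0 <= s <= b -> `|t - s| <= 1 ->
  (mom2 P (fun w => (Y t w - Y s w)%R) < +oo)%E /\
  l2norm P (fun w => (Y t w - Y s w)%R) <= K3 * `|t - s| `^ h3 * zfun h2 b.
Proof.
move=> ht hs dist_le1; apply: l2norm_le_of_mom2; first by rewrite incr_bound_ge0 ?powR_ge0.
apply: mom2_incr_le; rewrite ?powR_ge0 // => p /andP[h3_le_p _].
by rewrite ge0_ger_powR ?normr_ge0.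
Qed.

Section interval.
Variables a b : R.
Hypothesis a_ge0 : 0 <= a.
Hypothesis ab_ge1 : 1 <= b - a.

Lemma mom2_incr_le_interval t s (x : R) :
  a <= t <= b -> a <= s <= b -> `|t - s| <= x <= b - a ->
  (mom2 P (fun w => (Y t w - Y s w)%R) <=
   ((K3 * (x `^ h3 * (b - a) `^ (h4 - h3)) * zfun h2 b) ^+ 2)%:E)%E.
Proof.
move=> /andP[a_le_t t_le_b] /andP[a_le_s s_le_b] /andP[dist_le_x x_le].
have ht : 0 <= t <= b by rewrite t_le_b andbT (le_trans a_ge0).
have hs : 0 <= s <= b by rewrite s_le_b andbT (le_trans a_ge0).
apply: (mom2_incr_le ht hs); first by rewrite !mulr_ge0 ?powR_ge0.
move=> p hp.
have dist_ge0 : 0 <= `|t - s| <= b - a by rewrite normr_ge0 (le_trans dist_le_x).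
apply: le_trans (ler_powR_range dist_ge0 ab_ge1 h3_gt0 hp) _.
rewrite ler_wpM2r ?powR_ge0 // ge0_ler_powR ?nnegrE ?(ltW h3_gt0) //.
exact: le_trans dist_le_x.
Qed.

Lemma dist_le_interval t s : a <= t <= b -> a <= s <= b -> `|t - s| <= b - a.
Proof. by move=> /andP[? ?] /andP[? ?]; rewrite ler_norml; apply/andP; split; lra. Qed.

Lemma l2norm_incr_le_interval t s : a <= t <= b -> a <= s <= b ->
  (mom2 P (fun w => (Y t w - Y s w)%R) < +oo)%E /\
  l2norm P (fun w => (Y t w - Y s w)%R)
    <= K3 * `|t - s| `^ h3 * (b - a) `^ (h4 - h3) * zfun h2 b.
Proof.
move=> ht hs; rewrite -(mulrA K3).
apply: l2norm_le_of_mom2; first by rewrite incr_bound_ge0 ?mulr_ge0 ?powR_ge0.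
by apply: mom2_incr_le_interval; rewrite ?lexx ?dist_le_interval.
Qed.

Lemma l2norm_incr2_le_interval t1 t2 s1 s2 :
  a <= t1 <= b -> a <= t2 <= b -> a <= s1 <= b -> a <= s2 <= b ->
  (mom2 P (fun w => (Y t1 w - Y t2 w - Y s1 w + Y s2 w)%R) < +oo)%E /\
  l2norm P (fun w => (Y t1 w - Y t2 w - Y s1 w + Y s2 w)%R)
    <= 2 * K3 * (Num.max `|t1 - s1| `|t2 - s2|) `^ h3
         * (b - a) `^ (h4 - h3) * zfun h2 b.
Proof.
move=> ht1 ht2 hs1 hs2; set M := Num.max _ _.
have -> : (fun w => Y t1 w - Y t2 w - Y s1 w + Y s2 w)
    = (fun w => (Y t1 w - Y s1 w) - (Y t2 w - Y s2 w)) by apply/funext => w; ring.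
have mY t : a <= t <= b -> measurable_fun setT (Y t).
  by move=> /andP[a_le_t _]; apply: Y_meas; rewrite (le_trans a_ge0).
have M_le : M <= b - a by rewrite ge_max !dist_le_interval.
rewrite (_ : 2 * K3 * _ * _ * _
    = 2 * (K3 * (M `^ h3 * (b - a) `^ (h4 - h3)) * zfun h2 b)); last by rewrite !mulrA.
apply: l2norm_sub_le; rewrite ?incr_bound_ge0 ?mulr_ge0 ?powR_ge0 //.
- exact: measurable_funB (mY _ _) (mY _ _).
- exact: measurable_funB (mY _ _) (mY _ _).
- by apply: mom2_incr_le_interval; rewrite ?M_le ?le_max ?lexx.
- by apply: mom2_incr_le_interval; rewrite ?M_le ?le_max ?lexx ?orbT.
Qed.

End interval.

End mbm_increment.

Theorem lemma2 (R : realType) (d : measure_display) (T : measurableType d)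
  (P : probability T R) (H : R -> R) (Y : R -> T -> R)
  (h1 h2 D kappa K2 : R) :
  {within [set x : R | 0 <= x], continuous H} ->
  (forall t, 0 <= t -> 0 < H t < 1) ->
  0 < h1 -> h1 < h2 -> h2 < 1 ->
  (forall t, 0 <= t -> h1 <= H t <= h2) ->
  0 < D -> 0 < kappa -> kappa <= 1 ->
  (forall t s, 0 < s -> s <= t -> `|H t - H s| <= D * (t - s) `^ kappa) ->
  is_mbm P H Y ->
  0 < K2 ->
  (forall t s, 0 <= s -> s <= t ->
     (mom2 P (fun w => (Y t w - Y s w)%R) <=
      (K2 * (t - s) `^ (2 * H t)
       + K2 * (H t - H s) ^+ 2 * (zfun h2 s) ^+ 2)%:E)%E) ->
  let K3 := Num.sqrt K2 * Num.sqrt (1 + D ^+ 2) in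
  let h3 := Num.min h1 kappa in
  let h4 := Num.max h2 kappa in
  let h5 := h4 - h3 in
  forall a b : R, 0 <= a -> 0 <= b -> 1 <= b - a ->
  (forall t s, a <= t <= b -> a <= s <= b -> `|t - s| <= 1 ->
     (mom2 P (fun w => (Y t w - Y s w)%R) < +oo)%E /\
     l2norm P (fun w => (Y t w - Y s w)%R)
       <= K3 * `|t - s| `^ h3 * zfun h2 b) /\
  (forall t s, a <= t <= b -> a <= s <= b ->
     (mom2 P (fun w => (Y t w - Y s w)%R) < +oo)%E /\
     l2norm P (fun w => (Y t w - Y s w)%R)
       <= K3 * `|t - s| `^ h3 * (b - a) `^ h5 * zfun h2 b) /\
  (forall t1 t2 s1 s2, a <= t1 <= b -> a <= t2 <= b ->
     a <= s1 <= b -> a <= s2 <= b ->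
     (mom2 P (fun w => (Y t1 w - Y t2 w - Y s1 w + Y s2 w)%R) < +oo)%E /\
     l2norm P (fun w => (Y t1 w - Y t2 w - Y s1 w + Y s2 w)%R)
       <= 2 * K3 * (Num.max `|t1 - s1| `|t2 - s2|) `^ h3
            * (b - a) `^ h5 * zfun h2 b).
Proof.
move=> H_cont _ h1_gt0 h1_lt_h2 _ H_bounds D_gt0 k_gt0 _ H_holder0 mbm K2_gt0 mom2_Y_le.
move=> K3 h3 h4 h5 a b a_ge0 _ ab_ge1.
have h2_ge0 : 0 <= h2 by lra.
have h3_gt0 : 0 < h3 by rewrite lt_min h1_gt0.
have D_ge0 := ltW D_gt0.
have K2_ge0 := ltW K2_gt0.
have H_range t : 0 <= t -> h3 <= H t <= h4.
  by move=> /H_bounds/andP[h1_le h2_ge]; rewrite ge_min le_max h1_le h2_ge.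
have kappa_range : h3 <= kappa <= h4 by rewrite ge_min le_max !lexx !orbT.
have H_holder := holder_bound_at0 H_cont D_ge0 (ltW k_gt0) H_holder0.
have [Y_meas _] := mbm.
split; [|split].
- move=> t s /andP[a_le_t t_le_b] /andP[a_le_s s_le_b].
  apply: (l2norm_incr_le_near (H := H) (h4 := h4) (kappa := kappa)) => //.
  + by rewrite t_le_b (le_trans a_ge0).
  + by rewrite s_le_b (le_trans a_ge0).
- by move=> t s; apply: (l2norm_incr_le_interval (H := H) (kappa := kappa)).
- by move=> t1 t2 s1 s2; apply: (l2norm_incr2_le_interval (H := H) (kappa := kappa)).
Qed.
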